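(* Let $\Gamma$ be an initial limit Datalog problem. If $\Gamma$ is $\mathcal A$-satisfiable (in standard semantics), then there is an entwined family $\{\mathcal B_n\}_{n\in\omega}$ with $\mathcal B_{l+1}\models\Gamma$.
   Context: Standing assumptions. $\Sigma_{\mathrm{bg}}$ is a first-order signature with a distinguished sort $W$ and a binary relation symbol $\le$ on $W$. All other sorts are written $S$ and are interpreted by a fixed structure $\mathcal A$ as finite sets. $\le$ is interpreted as a total order. $\Sigma_{\mathrm{fg}}$ is a finite set of higher-order predicate symbols of initial type, disjoint from $\Sigma_{\mathrm{bg}}$. $l:=\max\{\mathrm{order}(\rho)\mid X:\rho\in\Sigma_{\mathrm{fg}}\}$. For $i\ge1$, $\Sigma_i\subseteq\Sigma_{\mathrm{fg}}$ consists of the symbols whose type has order at most $i$. Types. Relational types are $\rho::=o\mid\sigma\to\rho$ and argument types are $\sigma::=S\mid W\mid\rho$. The order is given by $\mathrm{order}(S)=\mathrm{order}(W)=\mathrm{order}(o)=0$ and $\mathrm{order}(\sigma\to\tau)=\max(\mathrm{order}(\sigma)+1,\mathrm{order}(\tau))$. Initial types. A type $\sigma_1\to\cdots\to\sigma_n\to o$ is initial if: (O1) at most one $\sigma_j$ is $W$; (O2) if $\sigma_j=W$, then $\mathrm{order}(\sigma_i)<\mathrm{order}(\sigma_j\to\cdots\to\sigma_n\to o)$ for all $i<j$; (O3) each $\sigma_j$ is $S$, $W$ or initial. It is active if some $\sigma_i=W$, and inactive otherwise. Active types are written $\xi$ and inactive ones $\nu$. Problems. A limit Datalog problem $\Gamma$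 is a finite set of higher-order constrained Horn clauses (goal and definite clauses, with $\Sigma_{\mathrm{bg}}$-constraints) over $\Sigma_{\mathrm{bg}}\cup\Sigma_{\mathrm{fg}}$. It includes, for each predicate with a $W$-argument, the limit clause forcing upward closure in that argument with respect to $\le$. It is initial if all symbols of $\Sigma_{\mathrm{fg}}$ have initial type. $\Gamma$ is $\mathcal A$-satisfiable if some $(\Sigma_{\mathrm{fg}},\mathcal S)$-structure (in standard semantics) satisfies every clause of $\Gamma$ under all valuations. Frames and structures. A frame $\mathcal H$ assigns to each type a set: $\mathcal H[S]=\mathcal A[S]$, $\mathcal H[W]=\mathcal A[W]$, $\mathcal H[o]=\mathbb B=\{0,1\}$, and $\mathcal H[\sigma_1\to\sigma_2]\subseteq[\mathcal H[\sigma_1]\to\mathcal H[\sigma_2]]$, where $[A\to B]$ is the set of all functions. $\mathcal S$ is the standard frame, using full function spaces. For $\Xi\subseteq\Sigma_{\mathrm{fg}}$, a $(\Xi,\mathcal H)$-structure $\mathcal B$ extends $\mathcal A$ by an element $X^{\mathcal B}\in\mathcal H[\rho]$ for each $X:\rho\in\Xi$. A $(\Xi_2,\mathcal H_2)$-structure $\mathcal B_2$ is an expansion of a $(\Xi_1,\mathcal H_1)$-structure $\mathcal B_1$ (with $\Xi_1\subseteq\Xi_2$) if $c^{\mathcal B_2}=c^{\mathcal B_1}$ for all $c\in\Xi_1$. $\mathcal B\models\Gamma$ means every clause of $\Gamma$ evaluates to $1$ in $\mathcal B$ under every valuation in the frame of $\mathcal B$. Ordering on relations. $\le_o$ on $[U_n\to\cdots\to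 U_1\to\mathbb B]$ is defined by: $f\le_o g$ iff ($f=0$ or $g=1$) when $n=0$, and iff $f(x)\le_o g(x)$ for all $x$ otherwise. $\top$ is the constantly-$1$ relation. Entwined frame. For $n\ge1$ and a $(\Xi,\mathcal H)$-structure $\mathcal B$, $\mathbb H[\mathcal B]_n$ is defined by cases on $\sigma$: (i) If $\sigma$ is initial with $\mathrm{order}(\sigma)\le n-2$, or $\sigma$ is inactive, $S$, $W$ or $o$ with $\mathrm{order}(\sigma)\le n-1$: $\mathbb H[\mathcal B]_n[\sigma]:=\mathcal H[\sigma]$. (ii) If $\sigma$ is active with $\mathrm{order}(\sigma)=n-1$: $\mathbb H[\mathcal B]_n[W\to\nu]:=\{\top\}\cup\{X^{\mathcal B}\,\overline s\mid X:\overline\tau\to W\to\nu\in\Xi,\ s_i\in\mathcal H[\tau_i]\}$, and $\mathbb H[\mathcal B]_n[\sigma_1\to\xi]:=[\mathbb H[\mathcal B]_n[\sigma_1]\to\mathbb H[\mathcal B]_n[\xi]]$. (iii) If $\sigma$ is initial with $\mathrm{order}(\sigma)=n$: $\mathbb H[\mathcal B]_n[W\to\nu]:=\{f\in[\mathcal A[W]\to\mathbb H[\mathcal B]_n[\nu]]\mid\forall z\le^{\mathcal A}z'.\ f(z)\le_o f(z')\}$, and $\mathbb H[\mathcal B]_n[\sigma_1\to\sigma_2]:=[\mathbb H[\mathcal B]_n[\sigma_1]\to\mathbb H[\mathcal B]_n[\sigma_2]]$ for $\sigma_1\ne W$. (iv) Otherwise: full function space. Entwined family. $\{\mathcal B_n\}_{n\in\omega}$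 is entwined if $\mathcal B_0$ is the unique $(\emptyset,\mathcal S)$-structure and each $\mathcal B_{n+1}$ is a $(\Sigma_{n+1},\mathbb H[\mathcal B_n]_{n+1})$-expansion of $\mathcal B_n$. *)

From mathcomp Require Import all_boot.
From Stdlib Require List.
Set Implicit Arguments. Unset Strict Implicit. Unset Printing Implicit Defensive.

Fixpoint hprod (I : Type) (F : I -> Type) (l : list I) : Type :=
  match l with nil => unit | i :: l' => (F i * hprod F l')%type end.

Section Types.
Variable Srt : Type.   (* names of the background sorts S other than W *)

Inductive bsrt := BS (s : Srt) | BW.

(* relational types  rho ::= o | sigma -> rho
   argument types    sigma ::= S | W | rho      (S, W packed in AB) *)
Inductive rty := RO | RArr (a : aty) (r : rty)
with aty := AB (b : bsrt) | AR (r : rty).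

Fixpoint ord_r (r : rty) : nat :=
  match r with RO => 0 | RArr a r' => maxn (ord_a a).+1 (ord_r r') end
with ord_a (a : aty) : nat :=
  match a with AB _ => 0 | AR r => ord_r r end.

Fixpoint args (r : rty) : list aty :=
  match r with RO => nil | RArr a r' => a :: args r' end.

Fixpoint mkr (l : list aty) : rty :=
  match l with nil => RO | a :: l' => RArr a (mkr l') end.

Definition isW (a : aty) : bool := match a with AB BW => true | _ => false end.

Definition O1 (r : rty) : Prop := count isW (args r) <= 1.

(* (O2) if sigma_j = W then order(sigma_i) < order(sigma_j -> ... -> sigma_n -> o)
        for all i < j  (indices counted from 0 here) *)
Definition O2 (r : rty) : Prop :=
  forall i j, i < j -> j < size (args r) ->
    isW (nth (AR RO) (args r) j) ->
    ord_a (nth (AR RO) (args r) i) < ord_r (mkr (drop j (args r))).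

Inductive initial_r : rty -> Prop :=
  | Initial r : O1 r -> O2 r -> (forall a, List.In a (args r) -> initial_a a) ->
                initial_r r
with initial_a : aty -> Prop :=
  | InitialB b : initial_a (AB b)
  | InitialR r : initial_r r -> initial_a (AR r).

Definition active (r : rty) : Prop := initial_r r /\ has isW (args r).
Definition inactive (r : rty) : Prop := initial_r r /\ ~~ has isW (args r).
End Types.

Arguments RO {Srt}.
Arguments BW {Srt}.

Record bgsig := BgSig {
  Srt : Type;                          (* sorts other than W *)
  Fsym : Type;
  fdom : Fsym -> list (bsrt Srt);
  fcod : Fsym -> bsrt Srt;
  Rsym : Type;                         (* relation symbols other than <= *)
  rdom : Rsym -> list (bsrt Srt)
}.

Definition bcar_of (S : Type) (SC : S -> Type) (WC : Type) (b : bsrt S) : Type :=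
  match b with BS s => SC s | BW => WC end.

Record bgstr (Sg : bgsig) := BgStr {
  SC : Srt Sg -> finType;
  WC : Type;
  leW : WC -> WC -> Prop;
  fint : forall f : Fsym Sg,
     hprod (bcar_of (fun s => SC s : Type) WC) (fdom f) ->
     bcar_of (fun s => SC s : Type) WC (fcod f);
  rint : forall p : Rsym Sg,
     hprod (bcar_of (fun s => SC s : Type) WC) (rdom p) -> Prop
}.

Definition total_order (T : Type) (le : T -> T -> Prop) : Prop :=
  (forall x, le x x) /\ (forall x y, le x y -> le y x -> x = y) /\
  (forall x y z, le x y -> le y z -> le x z) /\ (forall x y, le x y \/ le y x).

Section Syntax.
Variables (Sg : bgsig) (Sym : Type) (fty : Sym -> rty (Srt Sg)).

Notation aty := (aty (Srt Sg)).
Notation rty := (rty (Srt Sg)).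
Notation bsrt := (bsrt (Srt Sg)).

Inductive var : list aty -> aty -> Type :=
  | VZ (G : list aty) (a : aty) : var (a :: G) a
  | VS (G : list aty) (a b : aty) : var G a -> var (b :: G) a.

Fixpoint vidx (G : list aty) (a : aty) (v : var G a) : nat :=
  match v with VZ _ _ => 0 | VS _ _ _ v' => (vidx v').+1 end.

(* (lambda-free) terms over Sigma_bg u Sigma_fg *)
Inductive tm (G : list aty) : aty -> Type :=
  | Tvar (a : aty) : var G a -> tm G a
  | Tfg (X : Sym) : tm G (AR (fty X))
  | Tapp (a : aty) (r : rty) : tm G (AR (RArr a r)) -> tm G a -> tm G (AR r)
  | Tfun (f : Fsym Sg) : tms G (fdom f) -> tm G (AB (fcod f))
with tms (G : list aty) : list bsrt -> Type :=
  | Tnil : tms G nil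
  | Tcons (b : bsrt) (l : list bsrt) : tm G (AB b) -> tms G l -> tms G (b :: l).

Inductive form : list aty -> Type :=
  | Ftrue (G : list aty) : form G
  | Ffalse (G : list aty) : form G
  | Fle (G : list aty) : tm G (AB BW) -> tm G (AB BW) -> form G
  | Feq (G : list aty) (b : bsrt) : tm G (AB b) -> tm G (AB b) -> form G
  | Frel (G : list aty) (p : Rsym Sg) : tms G (rdom p) -> form G
  | Fnot (G : list aty) : form G -> form G
  | Fand (G : list aty) : form G -> form G -> form G
  | For (G : list aty) : form G -> form G -> form G
  | Fimp (G : list aty) : form G -> form G -> form G
  | Fex (G : list aty) (b : bsrt) : form (AB b :: G) -> form G
  | Fall (G : list aty) (b : bsrt) : form (AB b :: G) -> form G.

(* A clause  phi /\ A_1 /\ ... /\ A_m -> H  (H an atom X x1..xk, or absent: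
   goal clause).  The variables of the clause are given by the context cctx. *)
Record clause := Clause {
  cctx : list aty;
  ccon : form cctx;
  cbody : list (tm cctx (AR RO));
  chead : option (tm cctx (AR RO))
}.

(* t is X applied to the variables with indices l (in order) *)
Inductive appvars (G : list aty) : forall r : rty, tm G (AR r) -> Sym -> list nat -> Prop :=
  | AVfg (X : Sym) : appvars (Tfg G X) X nil
  | AVapp (a : aty) (r : rty) (t : tm G (AR (RArr a r))) (v : var G a) X l :
      appvars t X l -> appvars (Tapp t (Tvar v)) X (rcons l (vidx v)).

Definition clause_wf (C : clause) : Prop :=
  match chead C with
  | None => True
  | Some t => exists X l, appvars t X l /\ uniq l
  end.

Definition hasW (X : Sym) : bool := has (@isW _) (args (fty X)).

(* The limit clause for X (whose j-th argument has sort W):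
     X x1 .. z .. xk  /\  z <= z'  ->  X x1 .. z' .. xk
   with x1,..,xk,z,z' pairwise distinct and no further variables. *)
Definition is_limit_clause (X : Sym) (C : clause) : Prop :=
  exists (j : nat) (l1 l2 : list nat) (z z' : var (cctx C) (AB BW))
         (t1 t2 : tm (cctx C) (AR RO)),
    List.nth j (args (fty X)) (AR RO) = AB BW /\
    size (cctx C) = (size (args (fty X))).+1 /\
    ccon C = Fle (Tvar z) (Tvar z') /\
    cbody C = t1 :: nil /\
    chead C = Some t2 /\
    appvars t1 X l1 /\ appvars t2 X l2 /\
    uniq l1 /\ uniq l2 /\
    nth 0 l1 j = vidx z /\ nth 0 l2 j = vidx z' /\ vidx z <> vidx z' /\
    (forall i, i <> j -> nth 0 l1 i = nth 0 l2 i).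

Definition limit_problem (P : list clause) : Prop :=
  (forall C, List.In C P -> clause_wf C) /\
  (forall X, hasW X -> exists C, List.In C P /\ is_limit_clause X C).

Definition initial_sig : Prop := forall X, initial_r (fty X).
End Syntax.

Section Semantics.
Variables (Sg : bgsig) (A : bgstr Sg) (Sym : finType) (fty : Sym -> rty (Srt Sg)).

Notation aty := (aty (Srt Sg)).
Notation rty := (rty (Srt Sg)).
Notation bsrt := (bsrt (Srt Sg)).

Definition Db (b : bsrt) : Type := bcar_of (fun s => SC A s : Type) (WC A) b.

(* standard (full) domains;  elements of a frame are taken from these *)
Fixpoint Dr (r : rty) : Type :=
  match r with RO => bool | RArr a r' => Da a -> Dr r' end
with Da (a : aty) : Type :=
  match a with AB b => Db b | AR r => Dr r end.

(* A frame H is represented by a subset H[rho] of the full domain at each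
   relational type; at S and W it is A[S], A[W] and at o it is B. *)
Definition frame := forall r : rty, Dr r -> Prop.

Definition Ha (H : frame) (a : aty) : Da a -> Prop :=
  match a return Da a -> Prop with AB _ => fun _ => True | AR r => @H r end.

Definition is_frame (H : frame) : Prop :=
  (forall b, @H RO b) /\
  (forall a r (f : Dr (RArr a r)), @H _ f -> forall x, Ha H x -> @H r (f x)).

Definition std : frame := fun _ _ => True.

Fixpoint top (r : rty) : Dr r :=
  match r return Dr r with RO => true | RArr a r' => fun _ => top r' end.

(* interpretations of the foreground symbols; a (Xi,H)-structure is such an
   assignment whose values on the symbols of Xi lie in H (values of symbols
   outside Xi are irrelevant and never used) *)
Definition fgstr := forall X : Sym, Dr (fty X).

Definition is_str (Xi : Sym -> Prop) (H : frame) (B : fgstr) : Prop :=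
  forall X, Xi X -> H (fty X) (B X).

Inductive appchain (H : frame) (r0 : rty) (f0 : Dr r0) : forall r : rty, Dr r -> Prop :=
  | ACrefl : appchain H f0 f0
  | ACstep (a : aty) (r : rty) (g : Dr (RArr a r)) (x : Da a) :
      appchain H f0 g -> Ha H x -> appchain H f0 (g x).

Section Entwined.
Variables (n : nat) (Xi : Sym -> Prop) (H : frame) (B : fgstr).

Definition case_i (s : rty) : Prop :=
  (initial_r s /\ (ord_r s).+2 <= n) \/ (inactive s /\ (ord_r s).+1 <= n).
Definition case_ii (s : rty) : Prop := active s /\ (ord_r s).+1 = n.
Definition case_iii (s : rty) : Prop := initial_r s /\ ord_r s = n.

(* For each relational type: the set HH[B]_n[rho], together with the order
   <=_o on [HH[sigma_1] -> ... -> HH[sigma_k] -> B]. *)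
Fixpoint EHp (r : rty) : (Dr r -> Prop) * (Dr r -> Dr r -> Prop) :=
  match r return (Dr r -> Prop) * (Dr r -> Dr r -> Prop) with
  | RO =>
      (fun b : bool => case_i RO -> @H RO b,
       fun b c : bool => (b ==> c) : Prop)
  | RArr a r' =>
      let full : Dr (RArr a r') -> Prop :=
        fun f => forall x, @EHa a x -> (EHp r').1 (f x) in
      let fii : Dr (RArr a r') -> Prop :=
        match a as a0 return Dr (RArr a0 r') -> Prop with
        | AB BW => fun f =>
            f = top (RArr (AB BW) r') \/
            exists X, Xi X /\ appchain H (B X) f
        | AB (BS s) => fun f => forall x, (EHp r').1 (f x)
        | AR r0 => fun f => forall x, (EHp r0).1 x -> (EHp r').1 (f x)
        end in
      let fiii : Dr (RArr a r') -> Prop :=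
        match a as a0 return Dr (RArr a0 r') -> Prop with
        | AB BW => fun f =>
            (forall z, (EHp r').1 (f z)) /\
            (forall z z', @leW _ A z z' -> (EHp r').2 (f z) (f z'))
        | AB (BS s) => fun f => forall x, (EHp r').1 (f x)
        | AR r0 => fun f => forall x, (EHp r0).1 x -> (EHp r').1 (f x)
        end in
      let s := RArr a r' in
      (fun f =>
         [/\ case_i s -> @H s f,
             case_ii s -> fii f,
             case_iii s -> fiii f &
             ~ (case_i s \/ case_ii s \/ case_iii s) -> full f],
       fun f g => forall x, @EHa a x -> (EHp r').2 (f x) (g x))
  end
with EHa (a : aty) : Da a -> Prop :=
  match a return Da a -> Prop with
  | AB _ => fun _ => True
  | AR r => (EHp r).1
  end.

Definition EH : frame := fun r => (EHp r).1.
End Entwined.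

(* Sigma_i (i >= 1): symbols of order at most i;  Sigma_0 := empty *)
Definition SigN (i : nat) (X : Sym) : Prop := 0 < i /\ ord_r (fty X) <= i.

(* the frame of B_n:  S for n = 0,  HH[B_{n-1}]_n  otherwise *)
Fixpoint Fr (Bf : nat -> fgstr) (i : nat) : frame :=
  match i with
  | 0 => std
  | i'.+1 => EH i'.+1 (SigN i') (Fr Bf i') (Bf i')
  end.

Definition entwined (Bf : nat -> fgstr) : Prop :=
  forall i, is_str (SigN i.+1) (Fr Bf i.+1) (Bf i.+1) /\
            (forall X, SigN i X -> Bf i.+1 X = Bf i X).

Definition lmax : nat := \max_(X : Sym) ord_r (fty X).

Definition env (G : list aty) := forall a, var G a -> Da a.

Definition econs (G : list aty) (a : aty) (x : Da a) (e : env G) : env (a :: G) :=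
  fun b v =>
    match v in var G' b' return
      (match G' with nil => unit | c :: G'' => Da c -> env G'' -> Da b' end) with
    | VZ _ _ => fun x _ => x
    | VS _ _ _ v' => fun _ e' => e' _ v'
    end x e.

Section Eval.
Variable B : fgstr.

Fixpoint eval (G : list aty) (e : env G) (a : aty) (t : tm fty G a) {struct t} : Da a :=
  match t in tm _ _ a0 return Da a0 with
  | Tvar _ v => e _ v
  | Tfg X => B X
  | Tapp _ _ t1 t2 => (eval e t1) (eval e t2)
  | Tfun f ts => @fint _ A f (evals e ts)
  end
with evals (G : list aty) (e : env G) (l : list bsrt) (ts : tms fty G l) {struct ts}
  : hprod (bcar_of (fun s => SC A s : Type) (WC A)) l :=
  match ts in tms _ _ l0 return hprod (bcar_of (fun s => SC A s : Type) (WC A)) l0 with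
  | Tnil => tt
  | Tcons _ _ t ts' => (eval e t, evals e ts')
  end.

Fixpoint fsem (G : list aty) (phi : form fty G) : env G -> Prop :=
  match phi in form _ G0 return env G0 -> Prop with
  | Ftrue _ => fun _ => True
  | Ffalse _ => fun _ => False
  | Fle _ t1 t2 => fun e => @leW _ A (eval e t1) (eval e t2)
  | Feq _ _ t1 t2 => fun e => eval e t1 = eval e t2
  | Frel _ p ts => fun e => @rint _ A p (evals e ts)
  | Fnot _ p => fun e => ~ fsem p e
  | Fand _ p q => fun e => fsem p e /\ fsem q e
  | For _ p q => fun e => fsem p e \/ fsem q e
  | Fimp _ p q => fun e => fsem p e -> fsem q e
  | Fex _ b p => fun e => exists x : Db b, fsem p (@econs _ (AB b) x e)
  | Fall _ b p => fun e => forall x : Db b, fsem p (@econs _ (AB b) x e)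
  end.
End Eval.

Definition clause_sat (H : frame) (B : fgstr) (C : clause fty) : Prop :=
  forall e : env (cctx C), (forall a (v : var _ a), Ha H (e a v)) ->
    fsem B (ccon C) e ->
    (forall t, List.In t (cbody C) -> eval B e t = true) ->
    match chead C with
    | None => False
    | Some t => eval B e t = true
    end.

Definition models (H : frame) (B : fgstr) (P : list (clause fty)) : Prop :=
  forall C, List.In C P -> clause_sat H B C.

Definition A_satisfiable (P : list (clause fty)) : Prop :=
  exists B : fgstr, models std B P.
End Semantics.

(* Let B be a standard model of Gamma and take the constant family B_n := B.
   Restricting valuations to a smaller frame preserves the truth of every
   clause, so B_{l+1} |= Gamma, and the family is entwined as soon as B X lies
   in the n-th frame whenever order(X) <= n.  This is proved by induction on n,
   following the cases of the entwined frame: inactive types of order <= n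
   carry full function spaces; an active X of order n - 1 falls under case (ii),
   witnessed by its own partial applications; an active X of order n falls
   under case (iii) because its limit clause makes B X monotone in its
   W-argument; lower orders fall under case (i). *)

From mathcomp Require Import all_boot.
From Stdlib Require Import Eqdep Lia.
From mathcomp Require Import zify.
Set Implicit Arguments. Unset Strict Implicit. Unset Printing Implicit Defensive.

Lemma List_nthE (T : Type) (s : seq T) n x0 : List.nth n s x0 = nth x0 s n.
Proof. by elim: s n => [|x s IH] [|n] //=. Qed.

Lemma cat_cons_inj (T : Type) (s1 s2 t1 t2 : seq T) x y :
  size s1 = size s2 -> s1 ++ x :: t1 = s2 ++ y :: t2 -> [/\ s1 = s2, x = y & t1 = t2].
Proof.
elim: s1 s2 => [|x1 s1 IH] [|x2 s2] //=; first by move=> _ [-> ->].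
by move=> [Hs] [<- /(IH _ Hs) [<- -> ->]].
Qed.

Lemma take_drop_eq_off (T : Type) (x0 : T) (s1 s2 : seq T) j :
  size s1 = size s2 -> (forall i, i <> j -> nth x0 s1 i = nth x0 s2 i) ->
  take j s1 = take j s2 /\ drop j.+1 s1 = drop j.+1 s2.
Proof.
move=> Hs Hoff; split; apply: (@eq_from_nth _ x0); rewrite ?size_take_min ?size_drop ?Hs //.
  move=> i; rewrite leq_min => /andP[Hij _]; rewrite !nth_take //; apply: Hoff; lia.
by move=> i _; rewrite !nth_drop; apply: Hoff; lia.
Qed.

Section Types.
Variable T : Type.
Notation rty := (rty T).
Notation aty := (aty T).

Lemma mkr_args (r : rty) : mkr (args r) = r.
Proof. by elim: r => //= a r ->. Qed.

Lemma ord_mkr_drop (r : rty) j : ord_r (mkr (drop j (args r))) <= ord_r r.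
Proof.
elim: r j => [|a r IH] [|j] //=; first by rewrite mkr_args.
exact: leq_trans (IH j) (leq_maxr _ _).
Qed.

Lemma initialP (r : rty) : initial_r r ->
  [/\ O1 r, O2 r & forall a, List.In a (args r) -> initial_a a].
Proof. by case. Qed.

Lemma initial_RArr (a : aty) (r : rty) :
  initial_r (RArr a r) -> initial_a a /\ initial_r r.
Proof.
move=> /initialP [HO1 HO2 HO3]; split; first by apply: HO3; left.
constructor.
- move: HO1; rewrite /O1 /=; case: (isW a) => /=; lia.
- by move=> i j; apply: (HO2 i.+1 j.+1).
- by move=> b Hb; apply: HO3; right.
Qed.

Lemma initial_AR (r : rty) : initial_a (AR r) -> initial_r r.
Proof. by inversion 1. Qed.

Lemma active_RArr (a : aty) (r : rty) : active (RArr a r) -> ~~ isW a ->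
  [/\ active r, ord_r (RArr a r) = ord_r r & ord_a a < ord_r r].
Proof.
move=> [Hi HW] Ha; have [_ Hr] := initial_RArr Hi.
have HWr : has (@isW T) (args r) by move: HW => /=; rewrite (negbTE Ha).
have [j Hj HWj] := has_nthP (AR RO) HWr.
have [_ HO2 _] := initialP Hi.
have Hlt : ord_a a < ord_r r := leq_trans (HO2 0 j.+1 erefl Hj HWj) (ord_mkr_drop r j).
by split=> //=; apply/maxn_idPr.
Qed.

Lemma active_RArr_W (r : rty) : active (RArr (AB BW) r) -> inactive r.
Proof.
move=> [Hi _]; have [_ Hr] := initial_RArr Hi; split=> //.
by case/initialP: Hi; rewrite /O1 /= has_count; lia.
Qed.

Lemma inactive_RArr (a : aty) (r : rty) : inactive (RArr a r) -> inactive r.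
Proof.
move=> [Hi HW]; have [_ Hr] := initial_RArr Hi; split=> //.
by move: HW => /=; rewrite negb_or => /andP[].
Qed.

Lemma active_ord_gt0 (r : rty) : active r -> 0 < ord_r r.
Proof. by case: r => [[_ //]|a r _] /=; rewrite leq_max. Qed.

Lemma active_not_inactive (r : rty) : active r -> ~ inactive r.
Proof. by move=> [_ HW] [_]; rewrite HW. Qed.

Lemma nth_isW_inj (s : seq aty) i j : count (@isW T) s <= 1 ->
  i < size s -> j < size s -> isW (nth (AR RO) s i) -> isW (nth (AR RO) s j) -> i = j.
Proof.
elim: s i j => //= a s IH [|i] [|j] //= Hc Hi Hj HWi HWj.
- have : has (@isW T) s by apply/(has_nthP (AR RO)); exists j.
  by move: Hc; rewrite HWi has_count; lia.
- have : has (@isW T) s by apply/(has_nthP (AR RO)); exists i.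
  by move: Hc; rewrite HWj has_count; lia.
- by congr S; apply: IH => //; move: Hc; case: (isW a) => /=; lia.
Qed.
End Types.

Section Semantics.
Variables (Sg : bgsig) (A : bgstr Sg) (Sym : finType) (fty : Sym -> rty (Srt Sg)).
Notation rty := (rty (Srt Sg)).
Notation aty := (aty (Srt Sg)).
Notation dval := {a : aty & Da A a}.
Notation var := (@var Sg).
Notation vidx := (@vidx Sg).

Definition dval0 : dval := existT _ (AR RO) true.

Fixpoint accepts (r : rty) : Dr A r -> seq dval -> Prop :=
  match r return Dr A r -> seq dval -> Prop with
  | RO => fun f L => L = [::] /\ f = true
  | RArr a r' => fun f L =>
      if L is p :: L' then exists x : Da A a, p = existT _ a x /\ @accepts r' (f x) L'
      else False
  end.
Arguments accepts : clear implicits.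

Lemma accepts_cons (a : aty) (r : rty) (f : Dr A (RArr a r)) (x : Da A a) L :
  accepts (RArr a r) f (existT _ a x :: L) <-> accepts r (f x) L.
Proof.
split=> /= [[y [E Hy]]|Hf]; last by exists x.
by rewrite (inj_pairT2 _ _ _ _ _ E).
Qed.

Lemma accepts_types (r : rty) f L : accepts r f L -> map (@projT1 _ _) L = args r.
Proof.
elim: r f L => [|a r IH] f [|p L] //=; first by case.
by move=> [x [-> /IH <-]].
Qed.

Definition monotone_in_W (r : rty) (f : Dr A r) : Prop :=
  forall pre post (z z' : WC A), leW z z' ->
    nth (AR RO) (args r) (size pre) = AB BW ->
    accepts r f (pre ++ existT (Da A) (AB BW) z :: post) ->
    accepts r f (pre ++ existT (Da A) (AB BW) z' :: post).

Lemma monotone_in_W_app (a : aty) (r : rty) (f : Dr A (RArr a r)) :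
  monotone_in_W f -> forall x, monotone_in_W (f x).
Proof.
move=> Hf x pre post z z' Hzz' HW Hacc.
apply/(accepts_cons f x); apply: (Hf (existT _ a x :: pre) post z) => //.
exact/(accepts_cons f x).
Qed.

Fixpoint env_nth (G : seq aty) : env A G -> nat -> dval :=
  match G return env A G -> nat -> dval with
  | [::] => fun _ _ => dval0
  | a :: G' => fun e n =>
      if n is n'.+1 then env_nth (fun b v => e b (VS a v)) n'
      else existT _ a (e a (VZ G' a))
  end.

Lemma env_nth_var G a (v : var G a) (e : env A G) :
  env_nth e (vidx v) = existT _ a (e a v).
Proof. by elim: v e => //= G' a' b v IH e; rewrite IH. Qed.

Lemma env_var_of_nth G a (v : var G a) (e : env A G) x :
  env_nth e (vidx v) = existT _ a x -> e a v = x.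
Proof. by rewrite env_nth_var => /(inj_pairT2 _ _ _ _ _). Qed.

Lemma nth_vidx G a (v : var G a) : nth (AR RO) G (vidx v) = a.
Proof. by elim: v. Qed.

Lemma vidx_lt G a (v : var G a) : vidx v < size G.
Proof. by elim: v. Qed.

Lemma var_of_index (G : seq aty) n : n < size G -> exists a (v : var G a), vidx v = n.
Proof.
elim: G n => [|a G IH] [|n] //= Hn; first by exists a, (VZ G a).
by have [b [v <-]] := IH n Hn; exists b, (VS a v).
Qed.

Lemma env_realizes (G : seq aty) (g : nat -> dval) :
  (forall n, n < size G -> projT1 (g n) = nth (AR RO) G n) ->
  exists e : env A G, forall n, n < size G -> env_nth e n = g n.
Proof.
move=> Hg.
have Hty a (v : var G a) : projT1 (g (vidx v)) = a by rewrite Hg ?vidx_lt ?nth_vidx.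
exists (fun a v => eq_rect _ (Da A) (projT2 (g (vidx v))) a (Hty a v)).
move=> n /var_of_index [a [v <-]]; rewrite env_nth_var.
by move: (g (vidx v)) (Hty a v) => [b x] /= E; subst b.
Qed.

Lemma env_of_perm (G : seq aty) (l : seq nat) (L : seq dval) :
  perm_eq l (iota 0 (size G)) ->
  map (@projT1 _ _) L = map (nth (AR RO) G) l ->
  exists e : env A G, map (env_nth e) l = L.
Proof.
move=> Hperm HL.
have Hl : uniq l by rewrite (perm_uniq Hperm) iota_uniq.
have HlG n : (n \in l) = (n < size G) by rewrite (perm_mem Hperm) mem_iota.
have HLl : size L = size l by rewrite -(size_map (@projT1 _ _)) HL size_map.
have [|e He] := @env_realizes G (fun n => nth dval0 L (index n l)).
  move=> n; rewrite -HlG => Hn.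
  rewrite -(nth_map dval0 (AR RO)) ?HLl ?index_mem // HL (nth_map 0) ?index_mem //.
  by rewrite nth_index.
exists e; apply: (@eq_from_nth _ dval0); rewrite size_map ?HLl // => i Hi.
by rewrite (nth_map 0) // He -?HlG ?mem_nth // index_uniq.
Qed.

Notation tm := (@tm Sg Sym fty).
Variable B : fgstr A fty.

Lemma appvars_types G r (t : tm G (AR r)) X l : appvars t X l ->
  args (fty X) = map (nth (AR RO) G) l ++ args r /\ {subset l <= iota 0 (size G)}.
Proof.
elim=> [Y|a r' t' v Y l' _ [IHargs IHsub]] //.
split; first by rewrite IHargs map_rcons cat_rcons nth_vidx.
move=> n; rewrite mem_rcons inE => /predU1P [->|/IHsub //].
by rewrite mem_iota vidx_lt.
Qed.

Lemma accepts_appvars G r (t : tm G (AR r)) X l : appvars t X l ->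
  forall e rest,
    accepts r (eval B e t) rest <-> accepts (fty X) (B X) (map (env_nth e) l ++ rest).
Proof.
elim=> [Y|a r' t' v Y l' _ IH] e rest //=.
by rewrite map_rcons cat_rcons -IH env_nth_var accepts_cons.
Qed.

Lemma limit_clause_split X (C : clause fty) : is_limit_clause X C ->
  exists p q (z z' : var (cctx C) (AB BW)) (t1 t2 : tm (cctx C) (AR RO)),
    [/\ nth (AR RO) (args (fty X)) (size p) = AB BW,
        [/\ ccon C = Fle (Tvar fty z) (Tvar fty z'), cbody C = [:: t1] & chead C = Some t2],
        appvars t1 X (p ++ vidx z :: q), appvars t2 X (p ++ vidx z' :: q) &
        perm_eq (vidx z' :: p ++ vidx z :: q) (iota 0 (size (cctx C)))].
Proof.
move=> [j [l1 [l2 [z [z' [t1 [t2 [HWj [HG [Hcon [Hbody [Hhead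
  [Hav1 [Hav2 [Hu1 [Hu2 [Hz [Hz' [Hzz' Hoff]]]]]]]]]]]]]]]]]]].
have [Hargs1 Hsub1] := appvars_types Hav1; rewrite cats0 in Hargs1.
have [Hargs2 _] := appvars_types Hav2; rewrite cats0 in Hargs2.
rewrite List_nthE in HWj.
have Hl12 : size l1 = size l2.
  by rewrite -(size_map (nth (AR RO) (cctx C)) l1) -Hargs1 Hargs2 size_map.
have Hj : j < size l1.
  rewrite ltnNge -(size_map (nth (AR RO) (cctx C))) -Hargs1.
  by apply/negP => /(nth_default (AR RO)); rewrite HWj.
have [Htake Hdrop] := take_drop_eq_off Hl12 Hoff.
have El1 : l1 = take j l1 ++ vidx z :: drop j.+1 l1 by rewrite -Hz -drop_nth // cat_take_drop.
have El2 : l2 = take j l1 ++ vidx z' :: drop j.+1 l1.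
  by rewrite Htake Hdrop -Hz' -drop_nth -?Hl12 // cat_take_drop.
exists (take j l1), (drop j.+1 l1), z, z', t1, t2.
rewrite size_takel ?(ltnW Hj) // -El1 -El2; split=> //.
have Hz'l1 : vidx z' \notin l1.
  move: Hu2; rewrite El2 uniq_catC /= mem_cat negb_or => /andP[/andP[Hq Hp] _].
  rewrite El1 mem_cat inE (negbTE Hp) (negbTE Hq) orbF /=.
  by apply/eqP => /esym.
have Hu : uniq (vidx z' :: l1) by rewrite /= Hz'l1 Hu1.
apply: uniq_perm Hu (iota_uniq _ _) (uniq_min_size Hu _ _).2 => [n|].
  by rewrite inE => /predU1P [->|/Hsub1 //]; rewrite mem_iota vidx_lt.
by rewrite size_iota HG Hargs1 size_map.
Qed.

Lemma limit_clause_monotone X (C : clause fty) :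
  O1 (fty X) -> clause_sat (@std _ A) B C -> is_limit_clause X C ->
  monotone_in_W (B X).
Proof.
move=> HO1 HC /limit_clause_split [p [q [z [z' [t1 [t2
  [HWp [Hcon Hbody Hhead] Hav1 Hav2 Hperm]]]]]]].
move=> pre post w w' Hww' HWpre Hacc.
have [Hargs _] := appvars_types Hav1; rewrite cats0 in Hargs.
have Htys := accepts_types Hacc.
have Hp : size p = size pre.
  apply: (nth_isW_inj HO1); rewrite ?HWp ?HWpre //.
    by rewrite Hargs size_map size_cat /= addnS ltnS leq_addr.
  by rewrite -Htys size_map size_cat /= addnS ltnS leq_addr.
have [e He] : exists e : env A (cctx C), map (env_nth e) (vidx z' :: p ++ vidx z :: q) =
    existT (Da A) (AB BW) w' :: pre ++ existT (Da A) (AB BW) w :: post.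
  by apply: (env_of_perm Hperm); rewrite /= Htys Hargs nth_vidx.
case: He; rewrite map_cat /= => Ez' Ecat.
have [|Ep Ez Eq] := cat_cons_inj _ Ecat; first by rewrite size_map.
have := HC e; rewrite Hcon Hbody Hhead /= (env_var_of_nth Ez) (env_var_of_nth Ez') => Hsat.
have Ht1 : eval B e t1 = true.
  have : accepts (fty X) (B X) (map (env_nth e) (p ++ vidx z :: q) ++ [::]).
    by rewrite cats0 map_cat /= Ep Ez Eq.
  by move/(accepts_appvars Hav1) => [].
have Ht2 : eval B e t2 = true.
  by apply: Hsat Hww' _ => [[]|t [<-|[]]].
have : accepts RO (eval B e t2) [::] by [].
by move/(accepts_appvars Hav2); rewrite cats0 map_cat /= Ep Ez' Eq.
Qed.

Lemma models_std_frame (H : frame A) (P : seq (clause fty)) :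
  models (@std _ A) B P -> models H B P.
Proof. by move=> HB C HC e _; apply: (HB C HC e) => -[]. Qed.

Lemma limit_problem_monotone (Gamma : seq (clause fty)) :
  initial_sig fty -> limit_problem Gamma -> models (@std _ A) B Gamma ->
  forall X, hasW fty X -> monotone_in_W (B X).
Proof.
move=> Hinit [_ Hlim] HB X /Hlim [C [HC Hlc]].
by apply: limit_clause_monotone Hlc; [case/initialP: (Hinit X) | exact: HB].
Qed.
End Semantics.

Arguments accepts {Sg A} r f L.

Section EntwinedFrame.
Variables (Sg : bgsig) (A : bgstr Sg) (Sym : finType) (fty : Sym -> rty (Srt Sg)).
Notation rty := (rty (Srt Sg)).

Definition full_on_inactive (n : nat) (H : frame A) : Prop :=
  forall (r : rty) f, inactive r -> ord_r r < n -> H r f.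

Section Level.
Variables (n : nat) (Xi : Sym -> Prop) (H : frame A) (B : fgstr A fty).
Notation EHn := (EHp n Xi H B).

Lemma EH_case_i (r : rty) (f : Dr A r) : case_i n r -> EH n Xi H B f <-> @H r f.
Proof.
rewrite /EH; case: r f => [|a r] f Hi /=; first by split=> [/(_ Hi)|].
split=> [[/(_ Hi)] //|Hf]; split=> // [[Hac Hord]|[_ Hord]|].
- case: Hi => [[_ Hlt]|[Hin _]]; first by exfalso; lia.
  by case: (active_not_inactive Hac Hin).
- by exfalso; case: Hi => -[_]; lia.
- by case; left.
Qed.

Lemma EH_le_of_accepts (r : rty) (f g : Dr A r) :
  (forall L, accepts r f L -> accepts r g L) -> (EHn r).2 f g.
Proof.
elim: r f g => [|a r IH] f g Hfg /=.
  by case: f Hfg => // /(_ [::] (conj erefl erefl)) [_ ->].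
by move=> x _; apply: IH => L /(accepts_cons f x L) /Hfg /(accepts_cons g x L).
Qed.

Lemma EH_inactive (r : rty) : full_on_inactive n H -> inactive r -> ord_r r <= n ->
  forall f : Dr A r, EH n Xi H B f.
Proof.
move=> Hfull; elim: r => [|a r IH] Hin Hord f.
  by move=> Hi; apply: Hfull => //; case: Hi => -[]; lia.
have Hr := inactive_RArr Hin.
have Hord_r : ord_r r <= n by apply: leq_trans Hord; rewrite /= leq_maxr.
split=> // [Hi|[Hac _]|_|_].
- by apply: Hfull => //; case: Hi => -[]; lia.
- by case: (active_not_inactive Hac Hin).
- case: a f Hin {Hord} => [[s|]|r0] f Hin.
  + by move=> x; apply: IH.
  + by case: Hin.
  + by move=> x _; apply: IH.
- by move=> x _; apply: IH.
Qed.

Lemma EH_case_ii X (r : rty) : Xi X -> active r -> (ord_r r).+1 = n ->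
  forall f : Dr A r, appchain H (B X) f -> EH n Xi H B f.
Proof.
move=> HX; elim: r => [|a r IH] Hac Hord f Hf; first by case: Hac.
split=> [[[_ Hlt]|[Hin _]]|_|[_ Hord']|[]]; first (by exfalso; lia);
  first by case: (active_not_inactive Hac Hin).
- case: a f Hac Hord Hf => [[s|]|r0] f Hac Hord Hf.
  + have [Hac_r Hord_r _] := active_RArr Hac erefl.
    by move=> x; apply: IH (ACstep Hf I) => //; rewrite -Hord_r.
  + by right; exists X.
  + have [Hac_r Hord_r Hlt] := active_RArr Hac erefl.
    move=> x Hx; apply: IH => //; first by rewrite -Hord_r.
    apply: (ACstep Hf); apply: (EH_case_i x _).1 Hx; left; split.
      by have [/initial_AR] := initial_RArr Hac.1.
    by move: Hlt Hord; rewrite Hord_r /=; lia.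
- by exfalso; lia.
- by right; left.
Qed.

Lemma EH_case_iii (r : rty) : full_on_inactive n H -> active r -> ord_r r = n ->
  forall f : Dr A r, monotone_in_W f -> EH n Xi H B f.
Proof.
move=> Hfull; elim: r => [|a r IH] Hac Hord f Hmono; first by case: Hac.
split=> [[[_ Hlt]|[Hin _]]|[_ Hord']|_|[]]; first (by exfalso; lia);
  first by case: (active_not_inactive Hac Hin).
- by exfalso; lia.
- case: a f Hac Hord Hmono => [[s|]|r0] f Hac Hord Hmono.
  + have [Hac_r Hord_r _] := active_RArr Hac erefl.
    by move=> x; apply: IH; rewrite -?Hord_r //; exact: monotone_in_W_app Hmono x.
  + split=> [z|z z' Hzz'].
      apply: EH_inactive (active_RArr_W Hac) _ _ => //.
      by rewrite -Hord /= leq_maxr.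
    apply: EH_le_of_accepts => L /(accepts_cons f z L) Hz.
    by apply/(accepts_cons f z' L); apply: (Hmono [::] L z).
  + have [Hac_r Hord_r _] := active_RArr Hac erefl.
    by move=> x _; apply: IH; rewrite -?Hord_r //; exact: monotone_in_W_app Hmono x.
- by right; right; split=> //; case: Hac.
Qed.
End Level.

Lemma Fr_full_on_inactive (Bf : nat -> fgstr A fty) n : full_on_inactive n.+1 (Fr Bf n).
Proof.
elim: n => [//|n IH] r f Hin Hord.
exact: EH_inactive IH Hin Hord f.
Qed.

Lemma Fr_const_model (B : fgstr A fty) :
  initial_sig fty -> (forall X, hasW fty X -> monotone_in_W (B X)) ->
  forall n X, ord_r (fty X) <= n -> Fr (fun _ => B) n (B X).
Proof.
move=> Hinit Hmono; elim=> [//|n IH] X Hord.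
case HW: (hasW fty X); last first.
  have Hin : inactive (fty X) by split; [exact: Hinit | exact: negbT].
  exact: (Fr_full_on_inactive _ (B X) Hin Hord).
have Hac : active (fty X) by split.
change (EH n.+1 (SigN fty n) (Fr (fun _ => B) n) B (B X)).
move: Hord; rewrite leq_eqVlt => /predU1P [Hord|].
  exact: (EH_case_iii _ _ (Fr_full_on_inactive (fun _ => B) (n := n)) Hac Hord (Hmono X HW)).
rewrite ltnS leq_eqVlt => /predU1P [Hord|Hlt].
  have HX : SigN fty n X by split; rewrite -?Hord ?active_ord_gt0.
  exact: (EH_case_ii HX Hac (congr1 S Hord) (ACrefl _ _)).
apply/(EH_case_i _ _ _ (B X)); first by left; split.
exact: IH (ltnW Hlt).
Qed.
End EntwinedFrame.

Theorem mainTheorem6 (Sg : bgsig) (A : bgstr Sg) (Sym : finType)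
    (fty : Sym -> rty (Srt Sg)) (Gamma : list (clause fty)) :
  total_order (@leW _ A) ->
  limit_problem Gamma ->
  initial_sig fty ->
  A_satisfiable A Gamma ->
  exists Bf : nat -> fgstr A fty,
    entwined Bf /\ models (Fr Bf (lmax fty).+1) (Bf (lmax fty).+1) Gamma.
Proof.
move=> _ Hlim Hinit [B HB].
have Hmono := limit_problem_monotone Hinit Hlim HB.
exists (fun _ => B); split; last exact: models_std_frame.
by move=> i; split=> // X [_ Hord]; exact: Fr_const_model.
Qed.
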